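(* Let $p$ be an odd prime, $G$ a finite group and $P$ a Sylow $p$-subgroup of $G$. Assume that $P$ is nontrivial and that $N_G(P)/PC_G(P)$ has odd order. Then no nonidentity element of $Z(P)$ is real in $G$.
   Context: An element $t \in G$ is real in $G$ if $t$ is $G$-conjugate to $t^{-1}$. $Z(P)$ is the center of $P$. *)

From mathcomp Require Import all_boot all_fingroup all_solvable.
Set Implicit Arguments. Unset Strict Implicit. Unset Printing Implicit Defensive.
Local Open Scope group_scope.

Definition real_in (gT : finGroupType) (G : {set gT}) (t : gT) : Prop :=
  exists2 g, g \in G & t ^ g = t^-1.

From mathcomp Require Import all_boot all_fingroup all_solvable.
Set Implicit Arguments.
Unset Strict Implicit.
Unset Printing Implicit Defensive.
Local Open Scope group_scope.

(* If [n] in [N_G(P)] inverts [t], then so does every odd power of [n]; an odd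
   power lands in [P C_G(P)], which centralises [t] because [t] lies in [Z(P)].
   Hence [t = t^-1], and a [p]-element of order at most 2 is trivial as [p] is
   odd.  Such an [n] exists by Burnside's fusion argument: [P] and [P^g] are
   both Sylow in [C_G(t)]. *)

Lemma Sylow_center_fusion (gT : finGroupType) (p : nat) (G P : {group gT})
    t u g :
  p.-Sylow(G) P ->
  t \in 'Z(P) -> u \in 'Z(P) -> g \in G -> t ^ g = u ->
  exists2 n, n \in 'N_G(P) & t ^ n = u.
Proof.
move=> sylP /setIP[_ cPt] /setIP[_ cPu] Gg tg.
have sPG := pHall_sub sylP.
have sCG : 'C_G[u] \subset G := subsetIl _ _.
have sPC : P \subset 'C_G[u] by rewrite subsetI sPG sub_cent1.
have sPgC : P :^ g \subset 'C_G[u].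
  rewrite subsetI -(conjGid Gg) conjSg sPG sub_cent1 -tg centJ.
  by rewrite memJ_conjg cPt.
have sylPC : p.-Sylow('C_G[u]) P := pHall_subl sPC sCG sylP.
have sylPgC : p.-Sylow('C_G[u]) (P :^ g)%G.
  by apply: pHall_subl sPgC sCG _; rewrite pHallJ.
have [c /setIP[Gc /cent1P cuc] defP] := Sylow_trans sylPgC sylPC.
exists (g * c); last by rewrite conjgM tg conjgE -cuc mulKg.
by rewrite inE groupM //; apply/normP; rewrite conjsgM -defP.
Qed.

Lemma center_cents_joinsubcent (gT : finGroupType) (G P : {group gT}) t :
  t \in 'Z(P) -> P <*> 'C_G(P) \subset 'C[t].
Proof.
move=> /setIP[Pt cPt]; rewrite join_subG !sub_cent1 cPt /=.
by apply/centP=> x /setIP[_ /centP cPx]; apply/commute_sym/cPx.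
Qed.

Lemma odd_quotient_expg_mem (gT : finGroupType) (K H : {group gT}) n :
  K \subset 'N(H) -> n \in K -> odd #|K / H| ->
  exists2 m, odd m & n ^+ m \in H.
Proof.
move=> nHK Kn oddKH; have nHn := subsetP nHK n Kn.
exists #[coset H n].
  exact: dvdn_odd (order_dvdG (mem_quotient H Kn)) oddKH.
by apply: coset_idr; rewrite ?groupX // morphX // expg_order.
Qed.

Lemma conjg_expg_inv (gT : finGroupType) (t n : gT) m :
  t ^ n = t^-1 -> t ^ (n ^+ m) = if odd m then t^-1 else t.
Proof.
move=> tn; elim: m => [|m IHm]; first by rewrite conjg1.
by rewrite expgSr conjgM IHm /=; case: (odd m); rewrite /= ?conjVg tn ?invgK.
Qed.

Lemma inverted_cent_odd_expg (gT : finGroupType) (t n : gT) m :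
  t ^ n = t^-1 -> odd m -> n ^+ m \in 'C[t] -> t ^+ 2 = 1.
Proof.
move=> tn odd_m /cent1P cnt.
have : t ^ (n ^+ m) = t by rewrite conjgE -cnt mulKg.
by rewrite conjg_expg_inv // odd_m expgS expg1 => tV; rewrite -{1}tV mulVg.
Qed.

Lemma odd_p_elt_expg2_eq1 (gT : finGroupType) (p : nat) (t : gT) :
  odd p -> p.-elt t -> t ^+ 2 = 1 -> t = 1.
Proof.
move=> odd_p pt /eqP; rewrite -order_dvdn => t2.
apply/eqP; rewrite -order_eq1; apply/eqP/(pnat_1 pt)/(pnat_dvd t2).
by rewrite pnatE // !inE; apply: contraTneq odd_p => <-.
Qed.

Theorem lemma2p3 (gT : finGroupType) (p : nat) (G P : {group gT}) :
  prime p -> odd p -> P \in 'Syl_p(G) -> P :!=: 1 ->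
  odd #|'N_G(P) / (P <*> 'C_G(P))| ->
  forall t, t \in 'Z(P) -> t != 1 -> ~ real_in G t.
Proof.
move=> _ odd_p; rewrite inE => sylP _ oddQ t Zt ntt [g Gg tg].
have [n nPn tn] := Sylow_center_fusion sylP Zt (groupVr Zt) Gg tg.
have nHN : 'N_G(P) \subset 'N(P <*> 'C_G(P)).
  by apply: normsY; [apply: subsetIr | apply: subcent_norm].
have [m odd_m Hnm] := odd_quotient_expg_mem nHN nPn oddQ.
have cnt := subsetP (center_cents_joinsubcent G Zt) _ Hnm.
have pt : p.-elt t.
  exact: mem_p_elt (pHall_pgroup sylP) (subsetP (center_sub P) t Zt).
case/eqP: ntt; apply: odd_p_elt_expg2_eq1 odd_p pt _.
exact: inverted_cent_odd_expg tn odd_m cnt.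
Qed.
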